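(* The following set $\mathcal B_1$ of elements of $\hat{G}_{\Lambda,\Lambda_F}$ is linearly independent: (1) all $\bar\Xi^{\lambda_1}_{\lambda_2}\otimes f^{\dot I}_{\dot J}\otimes\Xi^{\lambda_3}_{\lambda_4}$ with $\lambda_1+\lambda_2>2$ and $\lambda_3+\lambda_4>2$; (2) all $\bar\Xi^{\lambda_1}_{\lambda_2}\otimes l^{\dot I}_{\dot J}$; (3) all $r^{\dot I}_{\dot J}\otimes\Xi^{\lambda_1}_{\lambda_2}$ with $\lambda_1\ne1$ or $\lambda_2\ne1$; (4) $\sigma^{\emptyset}_{\emptyset}$, all $\sigma^{I}_{\emptyset}$ and all $\sigma^{\emptyset}_{J}$; (5) all $\sigma^{I}_{J}$ such that the first integers of $I$ and $J$ are not simultaneously $1$. Here $\dot I,\dot J$ range over all sequences, $I,J$ over non-empty sequences, and the $\lambda_i$ over $\{1,\dots,\Lambda_F\}$.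
   Context: Fix positive integers $\Lambda,\Lambda_F$. A sequence $\dot I=i_1\cdots i_a$ is a finite, possibly empty, sequence of integers in $\{1,\dots,\Lambda\}$; $\emptyset$ is the empty sequence, undotted letters $I,J$ denote non-empty sequences, juxtaposition denotes concatenation, and $\delta^{\dot I}_{\dot J}$ is $1$ if $\dot I=\dot J$ and $0$ otherwise (similarly for integers). Let $\mathcal{T}_o$ be the complex vector space with basis the symbols $\bar\phi^{\lambda_1}\otimes s^{\dot K}\otimes\phi^{\lambda_2}$, $1\le\lambda_1,\lambda_2\le\Lambda_F$, $\dot K$ any sequence. For all sequences $\dot I,\dot J$ and all $\lambda_i\in\{1,\dots,\Lambda_F\}$ define linear operators on $\mathcal{T}_o$ (each written as a single symbol): first kind: $\bar\Xi^{\lambda_1}_{\lambda_2}\otimes f^{\dot I}_{\dot J}\otimes\Xi^{\lambda_3}_{\lambda_4}(\bar\phi^{\lambda_5}\otimes s^{\dot K}\otimes\phi^{\lambda_6})=\delta^{\lambda_5}_{\lambda_2}\delta^{\dot K}_{\dot J}\delta^{\lambda_6}_{\lambda_4}\,\bar\phi^{\lambda_1}\otimes s^{\dot I}\otimes\phi^{\lambda_3}$; second kind: $\bar\Xi^{\lambda_1}_{\lambda_2}\otimes l^{\dot I}_{\dot J}(\bar\phi^{\lambda_3}\otimes s^{\dot K}\otimes\phi^{\lambda_4})=\delta^{\lambda_3}_{\lambda_2}\sum_{\dot K_1\dot K_2=\dot K}\delta^{\dot K_1}_{\dot J}\,\bar\phi^{\lambda_1}\otimes s^{\dot I\dot K_2}\otimes\phi^{\lambda_4}$;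 third kind: $r^{\dot I}_{\dot J}\otimes\Xi^{\lambda_1}_{\lambda_2}(\bar\phi^{\lambda_3}\otimes s^{\dot K}\otimes\phi^{\lambda_4})=\delta^{\lambda_4}_{\lambda_2}\sum_{\dot K_1\dot K_2=\dot K}\delta^{\dot K_2}_{\dot J}\,\bar\phi^{\lambda_3}\otimes s^{\dot K_1\dot I}\otimes\phi^{\lambda_1}$; fourth kind: $\sigma^{\dot I}_{\dot J}(\bar\phi^{\lambda_1}\otimes s^{\dot K}\otimes\phi^{\lambda_2})=\sum_{\dot K_1\dot K_2\dot K_3=\dot K}\delta^{\dot K_2}_{\dot J}\,\bar\phi^{\lambda_1}\otimes s^{\dot K_1\dot I\dot K_3}\otimes\phi^{\lambda_2}$; sums run over all ways to write $\dot K$ as a concatenation of possibly empty sequences. The open string algebra $\hat{G}_{\Lambda,\Lambda_F}$ is the complex Lie algebra (commutator bracket) of operators on $\mathcal{T}_o$ spanned by all operators of these four kinds. *)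

From mathcomp Require Import all_boot all_algebra.
From mathcomp Require Import complex Rstruct.
From Stdlib Require Rdefinitions.
From Stdlib Require List.
Set Implicit Arguments. Unset Strict Implicit. Unset Printing Implicit Defensive.
Import GRing.Theory.

Definition CC : numClosedFieldType := complex Rdefinitions.R.

(* Basis symbol  phibar^{l1} (x) s^{K} (x) phi^{l2}  encoded as (l1, K, l2). *)
Definition basis : Type := prod (prod nat (seq nat)) nat.

Definition valid_lam (LF l : nat) : bool := (0 < l <= LF)%N.
Definition valid_seq (L : nat) (K : seq nat) : bool := all (fun k => 0 < k <= L)%N K.
Definition valid_basis (L LF : nat) (b : basis) : bool :=
  [&& valid_lam LF b.1.1, valid_seq L b.1.2 & valid_lam LF b.2].

Inductive gen : Type :=
| GenF of nat & nat & seq nat & seq nat & nat & nat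
    (* GenF l1 l2 I J l3 l4 = Xibar^{l1}_{l2} (x) f^I_J (x) Xi^{l3}_{l4} *)
| GenL of nat & nat & seq nat & seq nat
    (* GenL l1 l2 I J = Xibar^{l1}_{l2} (x) l^I_J *)
| GenR of seq nat & seq nat & nat & nat
    (* GenR I J l1 l2 = r^I_J (x) Xi^{l1}_{l2} *)
| GenS of seq nat & seq nat.
    (* GenS I J = sigma^I_J *)

(* Action of a generator on a basis vector: the image is the sum (with
   multiplicity) of the basis vectors in the returned list; sums over
   decompositions K = K1 K2 (resp. K1 K2 K3) are indexed by the cut points. *)
Definition act (g : gen) (b : basis) : seq basis :=
  let: (l5, K, l6) := b in
  match g with
  | GenF l1 l2 Is Js l3 l4 =>
      if [&& l5 == l2, K == Js & l6 == l4] then [:: (l1, Is, l3)] else [::]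
  | GenL l1 l2 Is Js =>
      if l5 == l2 then
        [seq (l1, Is ++ drop i K, l6) | i <- iota 0 (size K).+1 & take i K == Js]
      else [::]
  | GenR Is Js l1 l2 =>
      if l6 == l2 then
        [seq (l5, take i K ++ Is, l1) | i <- iota 0 (size K).+1 & drop i K == Js]
      else [::]
  | GenS Is Js =>
      flatten [seq [seq (l5, take i K ++ Is ++ drop j K, l6)
                   | j <- iota i (size K - i).+1 & drop i (take j K) == Js]
              | i <- iota 0 (size K).+1]
  end.

Definition coef (g : gen) (b b' : basis) : CC := (count_mem b' (act g b))%:R.

Definition inB1 (L LF : nat) (g : gen) : Prop :=
  match g with
  | GenF l1 l2 Is Js l3 l4 =>
      [/\ valid_lam LF l1 && valid_lam LF l2, valid_lam LF l3 && valid_lam LF l4,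
          valid_seq L Is && valid_seq L Js, (2 < l1 + l2)%N & (2 < l3 + l4)%N]
  | GenL l1 l2 Is Js =>
      [/\ valid_lam LF l1, valid_lam LF l2, valid_seq L Is & valid_seq L Js]
  | GenR Is Js l1 l2 =>
      [/\ valid_lam LF l1, valid_lam LF l2, valid_seq L Is, valid_seq L Js
        & (l1 != 1%N) || (l2 != 1%N)]
  | GenS Is Js =>
      valid_seq L Is /\ valid_seq L Js /\
      ((Is == [::]) || (Js == [::]) ||
       ~~ ((head 0%N Is == 1%N) && (head 0%N Js == 1%N)))
  end.

(* A finite linear combination sum_{g in s} c g * g of operators on T_o is the
   zero operator iff it sends every basis vector of T_o to 0. *)
Definition lincomb_zero (L LF : nat) (s : seq gen) (c : gen -> CC) : Prop :=
  forall b : basis, valid_basis L LF b ->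
  forall b' : basis, (\sum_(g <- s) c g * coef g b b')%R = 0%R.

From HB Require Import structures.
From mathcomp Require Import all_boot all_algebra ring.
From Stdlib Require List.
Set Implicit Arguments. Unset Strict Implicit. Unset Printing Implicit Defensive.
Import GRing.Theory.

(* Let D be the coefficient function of a vanishing combination. Reading off the
   coefficient of a basis vector (l', K', r') in the image of (l, K, r) gives a linear
   relation among the values of D at the generators sending one to the other. As a
   family indexed by K these relations are triangular in the length of the lower index:
   the factorisation that uses all of K involves a single generator. Comparing the
   relations for different boundary labels, and using that the generators with
   labels (1, 1) on an f- or r-side are not in B_1, kills the off-diagonal generators
   and the diagonal f and r generators, and shows that the diagonal l generators do
   not depend on their label. What remains is one relation between the l's with labels
   (1, 1) and the sigma's; as sigma^{1I}_{1J} is not in B_1, it gives l^{1I}_{1J} =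
   l^I_J, so by finiteness all these l's vanish, and then so do the sigma's. *)

Definition gen_eqb (g h : gen) : bool :=
  match g, h with
  | GenF a b c d e f, GenF a' b' c' d' e' f' =>
      [&& a == a', b == b', c == c', d == d', e == e' & f == f']
  | GenL a b c d, GenL a' b' c' d' => [&& a == a', b == b', c == c' & d == d']
  | GenR a b c d, GenR a' b' c' d' => [&& a == a', b == b', c == c' & d == d']
  | GenS a b, GenS a' b' => (a == a') && (b == b')
  | _, _ => false
  end.

Lemma gen_eqP : Equality.axiom gen_eqb.
Proof.
case=> [a b c d e f|a b c d|a b c d|a b] [a' b' c' d' e' f'|a' b' c' d'|a' b' c' d'|a' b'] /=;
  try by constructor.
all: repeat (case: eqP => [->|neq]; last by constructor; case=> *; apply: neq).
all: by constructor.
Qed.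

HB.instance Definition _ := hasDecEq.Build gen gen_eqP.

Lemma gen_eqE g h : (g == h) = gen_eqb g h.
Proof. by []. Qed.

Section Factorisations.

Variable T : eqType.
Implicit Types s u t : seq T.

Lemma cat_eq_takeE s u t :
  (u ++ t == s) = [&& size u <= size s, take (size u) s == u & drop (size u) s == t].
Proof.
apply/eqP/and3P => [<-|[_ /eqP take_s /eqP <-]].
  by rewrite size_cat leq_addr take_size_cat // drop_size_cat.
by rewrite -{1}take_s cat_take_drop.
Qed.

Lemma cat_eq_dropE s u t :
  (u ++ t == s) = [&& size t <= size s, drop (size s - size t) s == t
                    & take (size s - size t) s == u].
Proof.
apply/eqP/and3P => [<-|[_ /eqP drop_s /eqP <-]].
  by rewrite size_cat leq_addl addnK take_size_cat // drop_size_cat.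
by rewrite -{2}drop_s cat_take_drop.
Qed.

Definition suffix_cut (K K' : seq T) p := size K' - (size K - p).
Definition shares_suffix (K K' : seq T) p :=
  (size K - p <= size K') && (drop (suffix_cut K K' p) K' == drop p K).
Definition shares_prefix (K K' : seq T) i :=
  (i <= size K') && (take i K' == take i K).

(* The pairs (I, J) with K = J K2, K' = I K2 (indexed by the length of J), with
   K = K1 J, K' = K1 I, and with K = K1 J K3, K' = K1 I K3, respectively. *)
Definition lfactors (K K' : seq T) : seq (seq T * seq T) :=
  [seq (take (suffix_cut K K' p) K', take p K)
  | p <- iota 0 (size K).+1 & shares_suffix K K' p].
Definition rfactors (K K' : seq T) : seq (seq T * seq T) :=
  [seq (drop i K', drop i K) | i <- iota 0 (size K).+1 & shares_prefix K K' i].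
Definition sfactors (K K' : seq T) : seq (seq T * seq T) :=
  flatten [seq lfactors (drop i K) (drop i K')
          | i <- iota 0 (size K).+1 & shares_prefix K K' i].

End Factorisations.

Definition gen_kind (g : gen) : nat :=
  match g with
  | GenF _ _ _ _ _ _ => 0 | GenL _ _ _ _ => 1 | GenR _ _ _ _ => 2 | GenS _ _ => 3
  end.

(* The generators sending b to b', each listed as often as b' occurs in its image of b. *)
Definition gensF (b b' : basis) : seq gen :=
  let: (l, K, r) := b in let: (l', K', r') := b' in [:: GenF l' l K' K r' r].
Definition gensL (b b' : basis) : seq gen :=
  let: (l, K, r) := b in let: (l', K', r') := b' in
  if r' == r then [seq GenL l' l IJ.1 IJ.2 | IJ <- lfactors K K'] else [::].
Definition gensR (b b' : basis) : seq gen :=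
  let: (l, K, r) := b in let: (l', K', r') := b' in
  if l' == l then [seq GenR IJ.1 IJ.2 r' r | IJ <- rfactors K K'] else [::].
Definition gensS (b b' : basis) : seq gen :=
  let: (l, K, r) := b in let: (l', K', r') := b' in
  if (l' == l) && (r' == r) then [seq GenS IJ.1 IJ.2 | IJ <- sfactors K K'] else [::].
Definition gens_between (b b' : basis) : seq gen :=
  gensF b b' ++ gensL b b' ++ gensR b b' ++ gensS b b'.

Lemma count_gensF g b b' : gen_kind g != 0 -> count_mem g (gensF b b') = 0.
Proof.
case: b b' => [[l K] r] [[l' K'] r'] kind_g.
by apply/count_memPn; rewrite inE; apply: contra kind_g => /eqP->.
Qed.

Lemma count_gensL g b b' : gen_kind g != 1 -> count_mem g (gensL b b') = 0.
Proof.
case: b b' => [[l K] r] [[l' K'] r'] kind_g /=; case: ifP => // _.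
by apply/count_memPn/negP => /mapP[IJ _ eq_g]; rewrite eq_g in kind_g.
Qed.

Lemma count_gensR g b b' : gen_kind g != 2 -> count_mem g (gensR b b') = 0.
Proof.
case: b b' => [[l K] r] [[l' K'] r'] kind_g /=; case: ifP => // _.
by apply/count_memPn/negP => /mapP[IJ _ eq_g]; rewrite eq_g in kind_g.
Qed.

Lemma count_gensS g b b' : gen_kind g != 3 -> count_mem g (gensS b b') = 0.
Proof.
case: b b' => [[l K] r] [[l' K'] r'] kind_g /=; case: ifP => // _.
by apply/count_memPn/negP => /mapP[IJ _ eq_g]; rewrite eq_g in kind_g.
Qed.

Lemma count_mem_if (T : eqType) (b : bool) (s : seq T) z :
  count_mem z (if b then s else [::]) = count (fun t => b && (t == z)) s.
Proof. by case: b => //; rewrite count_pred0. Qed.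

Lemma if_count (T : Type) (b : bool) (P : pred T) (s : seq T) :
  (if b then count P s else 0) = count (fun t => b && P t) s.
Proof. by case: b => //; rewrite count_pred0. Qed.

Ltac case_atoms :=
  repeat match goal with
  | |- context [?x == ?y] => case: (x == y)
  | |- context [(?m <= ?n)%N] => case: (m <= n)%N
  end; done.

Lemma count_act_GenF l1 l2 I J l3 l4 b b' :
  count_mem b' (act (GenF l1 l2 I J l3 l4) b) = count_mem (GenF l1 l2 I J l3 l4) (gensF b b').
Proof.
case: b b' => [[l K] r] [[l' K'] r'] /=.
rewrite gen_eqE /= addn0.
case: ifP => /=; last by case_atoms.
rewrite !xpair_eqE [l1 == _]eq_sym [I == _]eq_sym [l3 == _]eq_sym.
by case_atoms.
Qed.

Lemma count_act_GenL l1 l2 I J b b' :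
  count_mem b' (act (GenL l1 l2 I J) b) = count_mem (GenL l1 l2 I J) (gensL b b').
Proof.
case: b b' => [[l K] r] [[l' K'] r']; cbv delta [act gensL] beta iota.
rewrite !count_mem_if /lfactors !count_map !count_filter.
apply: eq_count => p /=; rewrite gen_eqE /= !xpair_eqE cat_eq_dropE size_drop.
rewrite /shares_suffix /suffix_cut [l1 == _]eq_sym [r == _]eq_sym.
by case_atoms.
Qed.

Lemma count_act_GenR I J l1 l2 b b' :
  count_mem b' (act (GenR I J l1 l2) b) = count_mem (GenR I J l1 l2) (gensR b b').
Proof.
case: b b' => [[l K] r] [[l' K'] r']; cbv delta [act gensR] beta iota.
rewrite !count_mem_if /rfactors !count_map !count_filter.
apply: eq_in_count => i; rewrite mem_iota ltnS => /andP[_ le_iK] /=.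
rewrite gen_eqE /= !xpair_eqE cat_eq_takeE size_takel // /shares_prefix.
rewrite [l == _]eq_sym [l1 == _]eq_sym.
by case_atoms.
Qed.

Lemma count_act_GenS I J b b' :
  count_mem b' (act (GenS I J) b) = count_mem (GenS I J) (gensS b b').
Proof.
case: b b' => [[l K] r] [[l' K'] r']; cbv delta [act gensS] beta iota.
rewrite count_mem_if /sfactors map_flatten !count_flatten -!map_comp.
rewrite !sumnE !big_map big_filter [RHS]big_mkcond; apply: eq_big_seq => i.
rewrite mem_iota ltnS => /andP[_ le_iK]; rewrite /comp.
have -> : iota i (size K - i).+1 = map (addn i) (iota 0 (size K - i).+1).
  by rewrite -iotaDl addn0.
rewrite /lfactors !size_drop filter_map count_map.
rewrite !count_map count_filter if_count count_filter.
apply: eq_count => p /=.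
rewrite !xpair_eqE cat_eq_takeE size_takel // [drop i K' == _]eq_sym cat_eq_dropE.
rewrite gen_eqE /= /shares_prefix /shares_suffix /suffix_cut.
rewrite addnC -drop_drop -take_drop !size_drop [l == _]eq_sym [r == _]eq_sym.
by case_atoms.
Qed.

Lemma count_act g b b' : count_mem b' (act g b) = count_mem g (gens_between b b').
Proof.
rewrite /gens_between !count_cat.
case: g => [l1 l2 I J l3 l4|l1 l2 I J|I J l1 l2|I J].
- by rewrite count_act_GenF count_gensL ?count_gensR ?count_gensS // !addn0.
- by rewrite count_act_GenL count_gensF ?count_gensR ?count_gensS // add0n !addn0.
- by rewrite count_act_GenR count_gensF ?count_gensL ?count_gensS // add0n !addn0.
- by rewrite count_act_GenS count_gensF ?count_gensL ?count_gensR // !add0n.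
Qed.

Local Open Scope ring_scope.

Section FactorisationSums.

Variables (T : eqType) (R : zmodType).
Implicit Types (phi : seq T -> seq T -> R) (x : T).

Definition lsum phi (K K' : seq T) : R := \sum_(IJ <- lfactors K K') phi IJ.1 IJ.2.
Definition rsum phi (K K' : seq T) : R := \sum_(IJ <- rfactors K K') phi IJ.1 IJ.2.
Definition ssum phi (K K' : seq T) : R := \sum_(IJ <- sfactors K K') phi IJ.1 IJ.2.

Lemma lsumE phi K K' :
  lsum phi K K' = \sum_(p <- iota 0 (size K).+1 | shares_suffix K K' p)
                    phi (take (suffix_cut K K' p) K') (take p K).
Proof. by rewrite /lsum big_map big_filter. Qed.

Lemma rsumE phi K K' :
  rsum phi K K' = \sum_(i <- iota 0 (size K).+1 | shares_prefix K K' i)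
                    phi (drop i K') (drop i K).
Proof. by rewrite /rsum big_map big_filter. Qed.

Lemma ssumE phi K K' :
  ssum phi K K' = \sum_(i <- iota 0 (size K).+1 | shares_prefix K K' i)
                    lsum phi (drop i K) (drop i K').
Proof. by rewrite /ssum big_flatten big_map big_filter. Qed.

Lemma lsum_eq0 phi K K' : (forall I J, phi I J = 0) -> lsum phi K K' = 0.
Proof. by move=> phi0; apply: big1 => p _; apply: phi0. Qed.

Lemma rsum_eq0 phi K K' : (forall I J, phi I J = 0) -> rsum phi K K' = 0.
Proof. by move=> phi0; apply: big1 => p _; apply: phi0. Qed.

Lemma lsumD phi psi K K' :
  lsum (fun I J => phi I J + psi I J) K K' = lsum phi K K' + lsum psi K K'.
Proof. exact: big_split. Qed.

Lemma lsumB phi psi K K' :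
  lsum (fun I J => phi I J - psi I J) K K' = lsum phi K K' - lsum psi K K'.
Proof. exact: sumrB. Qed.

Lemma iota0S n : iota 0 n.+1 = 0%N :: map succn (iota 0 n).
Proof. by rewrite /= -[1%N]addn0 iotaDl. Qed.

Lemma lsum_nil phi K' : lsum phi [::] K' = phi K' [::].
Proof.
rewrite lsumE big_cons big_nil /shares_suffix /suffix_cut /= !subn0.
by rewrite drop_size take_size eqxx addr0.
Qed.

Lemma lsum_nilr phi K : lsum phi K [::] = phi [::] K.
Proof.
rewrite lsumE -addn1 iotaD big_cat add0n /= big_cons big_nil.
rewrite /shares_suffix /suffix_cut subnn !drop_size eqxx take_size addr0.
rewrite big1_seq ?add0r // => p /andP[/andP[sz_le _]].
by rewrite mem_iota add0n => /andP[_ ltpK]; move: sz_le; rewrite leqn0 subn_eq0 leqNgt ltpK.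
Qed.

Lemma lsum_cons phi x K K' :
  (forall I, phi I [::] = 0) -> (forall J, phi [::] J = 0) ->
  lsum phi (x :: K) (x :: K') = lsum (fun I J => phi (x :: I) (x :: J)) K K'.
Proof.
move=> phi_nilr phi_nill.
rewrite !lsumE iota0S big_cons big_map take0 phi_nilr add0r if_same.
rewrite big_mkcond [RHS]big_mkcond; apply: eq_bigr => p _.
rewrite /shares_suffix /suffix_cut /= subSS.
case: (leqP (size K - p) (size K')) => le_cut; first by rewrite subSn // ltnW.
by rewrite -subn_eq0 in le_cut; rewrite (eqP le_cut) take0 phi_nill; case: ifP.
Qed.

Lemma ssum_nil phi K' : ssum phi [::] K' = lsum phi [::] K'.
Proof. by rewrite ssumE big_cons big_nil /shares_prefix !take0 !drop0 eqxx addr0. Qed.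

Lemma ssum_nilr phi K : ssum phi K [::] = lsum phi K [::].
Proof.
rewrite ssumE iota0S big_cons big_map /shares_prefix !take0 !drop0 eqxx /=.
by rewrite big_pred0 ?addr0.
Qed.

Lemma ssum_cons phi x y K K' :
  ssum phi (x :: K) (y :: K') =
  lsum phi (x :: K) (y :: K') + (if x == y then ssum phi K K' else 0).
Proof.
rewrite ssumE iota0S big_cons big_map {1}/shares_prefix !take0 !drop0 eqxx /=.
congr (_ + _); have [<-|neq_xy] := eqVneq x y.
  by rewrite ssumE; apply: eq_bigl => i; rewrite /shares_prefix /= ltnS eqseq_cons eqxx.
by apply: big_pred0 => i; rewrite /shares_prefix /= eqseq_cons eq_sym (negbTE neq_xy) andbF.
Qed.

(* In [lsum phi J I] the factorisation with K2 empty contributes [phi I J];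
   all the others have a strictly shorter lower index. *)
Lemma lsum_triangular (P : pred (seq T)) phi :
  (forall J I, P J -> lsum phi J I = 0) -> (forall I J, ~~ P J -> phi I J = 0) ->
  forall I J, phi I J = 0.
Proof.
move=> lsum0 phi_out I J; move: {2}(size J).+1 (ltnSn (size J)) => n.
elim: n I J => // n IH I J ltJn.
have [PJ|] := boolP (P J); last exact: phi_out.
have := lsum0 J I PJ; rewrite lsumE -addn1 iotaD big_cat add0n /= big_cons big_nil.
rewrite /shares_suffix /suffix_cut subnn subn0 !drop_size eqxx !take_size addr0.
rewrite big1_seq ?add0r // => p /andP[_]; rewrite mem_iota add0n => /andP[_ ltpJ].
by apply: IH; rewrite size_takel (ltnW ltpJ, leq_trans ltpJ ltJn).
Qed.

(* Dually, in [rsum phi J I] the factorisation with K1 empty contributes [phi I J]. *)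
Lemma rsum_triangular (P : pred (seq T)) phi :
  (forall J I, P J -> rsum phi J I = 0) -> (forall I J, ~~ P J -> phi I J = 0) ->
  forall I J, phi I J = 0.
Proof.
move=> rsum0 phi_out I J; move: {2}(size J).+1 (ltnSn (size J)) => n.
elim: n I J => // n IH I J ltJn.
have [PJ|] := boolP (P J); last exact: phi_out.
have := rsum0 J I PJ; rewrite rsumE iota0S big_cons big_map /shares_prefix.
rewrite !take0 !drop0 eqxx /= big1_seq ?addr0 // => i /andP[_].
rewrite mem_iota => /andP[_ ltiJ]; apply: IH; rewrite size_drop.
rewrite ltnS in ltJn; apply: leq_trans ltJn.
by rewrite ltn_subrL (leq_ltn_trans _ ltiJ).
Qed.

End FactorisationSums.

Definition image_coef (D : gen -> CC) l (K : seq nat) r l' (K' : seq nat) r' : CC :=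
  D (GenF l' l K' K r' r)
  + (if r' == r then lsum (fun I J => D (GenL l' l I J)) K K' else 0)
  + (if l' == l then rsum (fun I J => D (GenR I J r' r)) K K' else 0)
  + (if (l' == l) && (r' == r) then ssum (fun I J => D (GenS I J)) K K' else 0).

Lemma sum_gens_between (D : gen -> CC) l K r l' K' r' :
  \sum_(g <- gens_between (l, K, r) (l', K', r')) D g = image_coef D l K r l' K' r'.
Proof.
rewrite /gens_between !big_cat /= big_cons big_nil addr0 /image_coef /lsum /rsum /ssum !addrA.
by case: (r' == r); case: (l' == l); rewrite /= ?big_nil ?addr0 ?big_map.
Qed.

Section SumCount.

Variables (T : eqType) (R : pzSemiRingType) (F : T -> R) (s : seq T).
Hypothesis uniq_s : uniq s.

Lemma sum_mul_eq_indicator h :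
  \sum_(g <- s) F g * (h == g)%:R = if h \in s then F h else 0.
Proof.
elim: s uniq_s => [|g0 s' IH] /=; first by rewrite big_nil.
case/andP=> g0_notin uniq_s'; rewrite big_cons IH // in_cons.
have [->|_] /= := eqVneq h g0; last by rewrite mulr0 add0r.
by rewrite (negbTE g0_notin) mulr1 addr0.
Qed.

Lemma sum_mul_count_mem l :
  \sum_(g <- s) F g * (count_mem g l)%:R = \sum_(h <- l) (if h \in s then F h else 0).
Proof.
elim: l => [|h l IH]; first by rewrite big_nil big1 // => g _; rewrite mulr0.
rewrite big_cons -IH -sum_mul_eq_indicator -big_split /=; apply: eq_bigr => g _.
by rewrite natrD mulrDr.
Qed.

End SumCount.

Lemma lincomb_image_coef (s : seq gen) (c : gen -> CC) l K r l' K' r' : uniq s ->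
  \sum_(g <- s) c g * coef g (l, K, r) (l', K', r') =
  image_coef (fun g => if g \in s then c g else 0) l K r l' K' r'.
Proof.
move=> uniq_s; rewrite -sum_gens_between -sum_mul_count_mem //.
by apply: eq_bigr => g _; rewrite /coef count_act.
Qed.

(* On the diagonal l' = l, r' = r the sigma part of the coefficient does not depend
   on the labels, so it cancels from the difference of two such coefficients. *)
Lemma image_coef_diagB (D : gen -> CC) l r l' r' K K' :
  image_coef D l K r l K' r - image_coef D l' K r' l' K' r' =
  (D (GenF l l K' K r r) - D (GenF l' l' K' K r' r'))
  + (lsum (fun I J => D (GenL l l I J)) K K' - lsum (fun I J => D (GenL l' l' I J)) K K')
  + (rsum (fun I J => D (GenR I J r r)) K K' - rsum (fun I J => D (GenR I J r' r')) K K').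
Proof. by rewrite /image_coef !eqxx andbT; ring. Qed.

Section VanishingCombination.

Variables (L LF : nat) (D : gen -> CC).
Hypotheses (L_gt0 : (0 < L)%N) (LF_gt0 : (0 < LF)%N).
Hypothesis D_B1 : forall g, ~ inB1 L LF g -> D g = 0.
Hypothesis image_coef_eq0 : forall l K r l' K' r',
  valid_lam LF l -> valid_seq L K -> valid_lam LF r -> image_coef D l K r l' K' r' = 0.

Lemma valid_lam1 : valid_lam LF 1%N.
Proof. exact: LF_gt0. Qed.

Lemma DF11_left I J r' r : D (GenF 1%N 1%N I J r' r) = 0.
Proof. by apply: D_B1; case. Qed.

Lemma DF11_right l' l I J : D (GenF l' l I J 1%N 1%N) = 0.
Proof. by apply: D_B1; case. Qed.

Lemma DR11 I J : D (GenR I J 1%N 1%N) = 0.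
Proof. by apply: D_B1; case. Qed.

Lemma rsum_DR11 K K' : rsum (fun I J => D (GenR I J 1%N 1%N)) K K' = 0.
Proof. exact: rsum_eq0 DR11. Qed.

Lemma DR_offdiag l1 l2 I J : l1 != l2 -> D (GenR I J l1 l2) = 0.
Proof.
move=> ne_l; have [vl2|/negP inv] := boolP (valid_lam LF l2); last first.
  by apply: D_B1; case=> _ /inv.
move: I J; apply: (rsum_triangular (P := valid_seq L)) => [J I vJ|I J /negP invJ].
  have := image_coef_eq0 1%N I l1 valid_lam1 vJ vl2.
  rewrite /image_coef (negbTE ne_l) eqxx D_B1 /=; last by case.
  by rewrite !add0r addr0.
by apply: D_B1; case=> _ _ _ /invJ.
Qed.

Lemma DL_offdiag l1 l2 I J : l1 != l2 -> D (GenL l1 l2 I J) = 0.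
Proof.
move=> ne_l; have [vl2|/negP inv] := boolP (valid_lam LF l2); last first.
  by apply: D_B1; case=> _ /inv.
move: I J; apply: (lsum_triangular (P := valid_seq L)) => [J I vJ|I J /negP invJ].
  have := image_coef_eq0 l1 I 1%N vl2 vJ valid_lam1.
  rewrite /image_coef (negbTE ne_l) eqxx D_B1 /=; last by case.
  by rewrite add0r !addr0.
by apply: D_B1; case=> _ _ _ /invJ.
Qed.

Lemma DF_offdiag l' l I J r' r : (l' != l) || (r' != r) -> D (GenF l' l I J r' r) = 0.
Proof.
move=> ne_lr.
have [/and3P[vl vJ vr]|inv] :=
  boolP [&& valid_lam LF l, valid_seq L J & valid_lam LF r]; last first.
  by apply: D_B1; case=> /andP[_ vl] /andP[_ vr] /andP[_ vJ] _ _; rewrite vl vJ vr in inv.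
have := image_coef_eq0 l' I r' vl vJ vr; rewrite /image_coef.
have [eq_r|ne_r] := eqVneq r' r; have [eq_l|ne_l] := eqVneq l' l => //=.
- by rewrite eq_l eq_r !eqxx in ne_lr.
- by rewrite (lsum_eq0 _ _ (fun I J => DL_offdiag I J ne_l)) !addr0.
- by rewrite (rsum_eq0 _ _ (fun I J => DR_offdiag I J ne_r)) !addr0.
- by rewrite !addr0.
Qed.

Lemma image_coef_diagB_eq0 l r l' r' K K' :
  valid_lam LF l -> valid_lam LF r -> valid_lam LF l' -> valid_lam LF r' -> valid_seq L K ->
  (D (GenF l l K' K r r) - D (GenF l' l' K' K r' r'))
  + (lsum (fun I J => D (GenL l l I J)) K K' - lsum (fun I J => D (GenL l' l' I J)) K K')
  + (rsum (fun I J => D (GenR I J r r)) K K' - rsum (fun I J => D (GenR I J r' r')) K K') = 0.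
Proof.
by move=> vl vr vl' vr' vK; rewrite -image_coef_diagB !image_coef_eq0 ?subrr.
Qed.

Lemma DR_diag r I J : r != 1%N -> D (GenR I J r r) = 0.
Proof.
move=> ne_r1; have [vr|/negP inv] := boolP (valid_lam LF r); last first.
  by apply: D_B1; case=> _ /inv.
move: I J; apply: (rsum_triangular (P := valid_seq L)) => [J I vJ|I J /negP invJ].
  have := image_coef_diagB_eq0 I valid_lam1 vr valid_lam1 valid_lam1 vJ.
  by rewrite !DF11_left rsum_DR11 !subrr subr0 !add0r.
by apply: D_B1; case=> _ _ _ /invJ.
Qed.

Lemma DL_diag l I J : valid_lam LF l -> D (GenL l l I J) = D (GenL 1%N 1%N I J).
Proof.
move=> vl; apply/eqP; rewrite -subr_eq0; apply/eqP; move: I J.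
apply: (lsum_triangular (P := valid_seq L)) => [J I vJ|I J /negP invJ].
  have := image_coef_diagB_eq0 I vl valid_lam1 valid_lam1 valid_lam1 vJ.
  by rewrite !DF11_right subr0 add0r subrr addr0 lsumB.
by rewrite /= !D_B1 ?subr0 //; case=> _ _ _ /invJ.
Qed.

Lemma DF_diag l I J r : D (GenF l l I J r r) = 0.
Proof.
have [/and4P[vl vJ vr r_gt1]|inv] :=
  boolP [&& valid_lam LF l, valid_seq L J, valid_lam LF r & (2 < r + r)%N]; last first.
  apply: D_B1; case=> /andP[_ vl] /andP[_ vr] /andP[_ vJ] _ r_gt1.
  by rewrite vl vJ vr r_gt1 in inv.
have ne_r1 : r != 1%N by apply: contraTneq r_gt1 => ->.
have := image_coef_diagB_eq0 I vl vr vl valid_lam1 vJ.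
rewrite DF11_right subr0 subrr addr0 rsum_DR11 subr0.
by rewrite (rsum_eq0 _ _ (fun I J => DR_diag I J ne_r1)) addr0.
Qed.

Local Notation DL11 := (fun I J => D (GenL 1%N 1%N I J)).
Local Notation DS := (fun I J => D (GenS I J)).

Lemma lsum_DL11_ssum_DS K K' : valid_seq L K -> lsum DL11 K K' + ssum DS K K' = 0.
Proof.
move=> vK; have := image_coef_eq0 1%N K' 1%N valid_lam1 vK valid_lam1.
by rewrite /image_coef eqxx DF11_right rsum_DR11 add0r addr0.
Qed.

Lemma DL11_cons1 I J : D (GenL 1%N 1%N (1%N :: I) (1%N :: J)) = D (GenL 1%N 1%N I J).
Proof.
have DL11_DS_nilr X : D (GenL 1%N 1%N X [::]) + D (GenS X [::]) = 0.
  by have := lsum_DL11_ssum_DS X (isT : valid_seq L [::]); rewrite ssum_nil !lsum_nil.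
have DL11_DS_nill Y : D (GenL 1%N 1%N [::] Y) + D (GenS [::] Y) = 0.
  have [vY|/negP invY] := boolP (valid_seq L Y).
    by have := lsum_DL11_ssum_DS [::] vY; rewrite ssum_nilr !lsum_nilr.
  by rewrite !D_B1 ?addr0 //; [case=> _ [/invY] | case=> _ _ _ /invY].
apply/eqP; rewrite -subr_eq0; apply/eqP; move: I J.
apply: (lsum_triangular (P := valid_seq L)) => [J I vJ|I J /negP invJ]; last first.
  by rewrite !D_B1 ?subrr //; case=> _ _ _ // /andP[_ /invJ].
(* sigma^{1I}_{1J} is not in B_1, so the relation at (1J, 1I) differs from the
   one at (J, I) only in its l-terms. *)
have v1J : valid_seq L (1%N :: J) by apply/andP.
have := lsum_DL11_ssum_DS (1%N :: I) v1J.
rewrite ssum_cons eqxx addrA -lsumD lsum_cons // lsumD.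
rewrite (lsum_eq0 _ _ (_ : forall I J, D (GenS (1%N :: I) (1%N :: J)) = 0)); last first.
  by move=> I' J'; apply: D_B1; case=> _ [].
move=> rel_cons; rewrite lsumB; apply/eqP; rewrite subr_eq0; apply/eqP.
by apply: (addIr (ssum DS J I)); rewrite addr0 in rel_cons; rewrite rel_cons lsum_DL11_ssum_DS.
Qed.

Variable s : seq gen.
Hypothesis D_supp : forall g, g \notin s -> D g = 0.

Lemma DL11_eq0 I J : D (GenL 1%N 1%N I J) = 0.
Proof.
pose upper_size g := if g is GenL _ _ I' _ then size I' else 0%N.
pose N := \max_(g <- s) upper_size g.
have DL11_nseq n :
    D (GenL 1%N 1%N I J) = D (GenL 1%N 1%N (nseq n 1%N ++ I) (nseq n 1%N ++ J)).
  by elim: n => //= n ->; rewrite DL11_cons1.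
rewrite (DL11_nseq N.+1) D_supp //.
apply/negP => /(@leq_bigmax_seq _ _ xpredT upper_size) /(_ isT).
by rewrite /upper_size size_cat size_nseq ltn_geF // ltnS leq_addr.
Qed.

Lemma DS_eq0 I J : D (GenS I J) = 0.
Proof.
have ssum_DS K K' : valid_seq L K -> ssum DS K K' = 0.
  move=> vK; have := lsum_DL11_ssum_DS K' vK.
  by rewrite lsum_eq0 ?add0r // => I' J'; apply: DL11_eq0.
move: I J; apply: (lsum_triangular (P := valid_seq L)) => [J I vJ|I J /negP invJ]; last first.
  by apply: D_B1; case=> _ [/invJ].
case: J vJ => [|x J] vJ; first by rewrite -ssum_nil ssum_DS.
case: I => [|y I]; first by rewrite -ssum_nilr ssum_DS.
have := ssum_DS _ (y :: I) vJ; rewrite ssum_cons.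
by case: (x == y); rewrite ?ssum_DS ?addr0 //; case/andP: vJ.
Qed.

Lemma D_eq0 g : D g = 0.
Proof.
case: g => [l' l I J r' r|l1 l2 I J|I J l1 l2|I J].
- have [ne|] := boolP ((l' != l) || (r' != r)); first exact: DF_offdiag.
  by rewrite negb_or !negbK => /andP[/eqP-> /eqP->]; apply: DF_diag.
- have [ne|/negPn/eqP <-] := boolP (l1 != l2); first exact: DL_offdiag.
  have [vl|/negP inv] := boolP (valid_lam LF l1); first by rewrite DL_diag // DL11_eq0.
  by apply: D_B1; case=> /inv.
- have [ne|/negPn/eqP <-] := boolP (l1 != l2); first exact: DR_offdiag.
  have [ne1|/negPn/eqP ->] := boolP (l1 != 1%N); first exact: DR_diag.
  exact: DR11.
- exact: DS_eq0.
Qed.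

End VanishingCombination.

Lemma In_mem (T : eqType) (x : T) (s : seq T) : List.In x s <-> x \in s.
Proof.
elim: s => //= y s IH; rewrite in_cons; split.
  by case=> [->|/IH ->]; rewrite ?eqxx ?orbT.
by case/orP=> [/eqP ->|/IH]; [left|right].
Qed.

Lemma NoDup_uniq (T : eqType) (s : seq T) : List.NoDup s -> uniq s.
Proof.
elim: s => //= x s IH /List.NoDup_cons_iff[x_notin /IH ->].
by rewrite andbT; apply/negP => /In_mem.
Qed.

Theorem lemma3 (L LF : nat) (hL : (0 < L)%N) (hLF : (0 < LF)%N)
  (s : seq gen) (c : gen -> CC) :
  List.NoDup s -> (forall g, List.In g s -> inB1 L LF g) ->
  lincomb_zero L LF s c ->
  forall g, List.In g s -> c g = 0%R.
Proof.
move=> /NoDup_uniq uniq_s s_B1 comb0 g /In_mem g_s.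
pose D g := if g \in s then c g else 0.
have D_B1 h : ~ inB1 L LF h -> D h = 0.
  by rewrite /D; case: ifP => // /In_mem h_s /(_ (s_B1 h h_s)).
have image_coef_eq0 l K r l' K' r' :
    valid_lam LF l -> valid_seq L K -> valid_lam LF r -> image_coef D l K r l' K' r' = 0.
  move=> vl vK vr; rewrite -lincomb_image_coef //.
  by apply: comb0; rewrite /valid_basis /= vl vK vr.
have D_supp h : h \notin s -> D h = 0 by rewrite /D => /negbTE ->.
by have := D_eq0 hL hLF D_B1 image_coef_eq0 D_supp g; rewrite /D g_s.
Qed.
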